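(* Let $R$ be a commutative ring with identity, $M$ an $R$-module and $a\in R$. Then $a\Gamma_{a}\big(M/a\Gamma_{a}(M)\big)=0$.
   Context: For an $R$-module $N$ and $a\in R$: $\Gamma_{a}(N)=\{n\in N \mid a^{k}n=0 \text{ for some } k\in\mathbb{Z}^{+}\}$ and $a\Gamma_{a}(N)=\{an \mid n\in \Gamma_a(N)\}$. *)

From HB Require Import structures.
From mathcomp Require Import all_boot all_algebra.
Set Implicit Arguments. Unset Strict Implicit. Unset Printing Implicit Defensive.
Import GRing.Theory.
Local Open Scope ring_scope.

Definition Gamma (R : comPzRingType) (N : lmodType R) (a : R) (n : N) : Prop :=
  exists k : nat, (0 < k)%N /\ a ^+ k *: n = 0.

Definition aGamma (R : comPzRingType) (N : lmodType R) (a : R) (x : N) : Prop :=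
  exists2 n : N, Gamma a n & x = a *: n.

From HB Require Import structures.
From mathcomp Require Import all_boot all_algebra.
Import GRing.Theory.
Local Open Scope ring_scope.

(* If [a^k q = 0] in [M / a Gamma_a(M)], lift [q] to [m]: then [a^k m = a n]
   with [a^j n = 0], so [a^(j+k) m = 0], i.e. [m] lies in [Gamma_a(M)] and
   [a m] already lies in [a Gamma_a(M)]. *)

Lemma Gamma_of_aGamma_expZ (R : comPzRingType) (M : lmodType R) (a : R)
    (k : nat) (m : M) :
  aGamma a (a ^+ k *: m) -> Gamma a m.
Proof.
move=> [n [j [j_gt0 ajn]] akm].
exists (j + k)%N; split; first by rewrite addn_gt0 j_gt0.
by rewrite exprD -scalerA akm scalerA -exprSr exprS -scalerA ajn scaler0.
Qed.

Theorem mainTheorem5 (R : comPzRingType) (M : lmodType R) (a : R)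
    (Q : lmodType R) (pi : {linear M -> Q}) :
  (forall q : Q, exists m : M, pi m = q) ->
  (forall m : M, pi m = 0 <-> aGamma a m) ->
  forall q : Q, aGamma a q -> q = 0.
Proof.
move=> pi_surj ker_pi _ [q [k [_ akq]] ->].
have [m pim] := pi_surj q.
have Gm : Gamma a m.
  by apply: (@Gamma_of_aGamma_expZ _ _ _ k); apply/ker_pi; rewrite linearZ pim.
have /ker_pi : aGamma a (a *: m) by exists m.
by rewrite linearZ pim.
Qed.
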